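(* Let $(G,Y)$ be a $C$-group and let $S(G,Y)$ be its factorization semigroup with product homomorphism $\alpha_G:S(G,Y)\to G$. Two elements $s_1,s_2\in S(G,Y)$ are equivalent if and only if $\alpha_G(s_1)=\alpha_G(s_2)$.
   Context: An equipped group is a pair $(G,O)$ where $G$ is a group and $O\subset G$ is a union of finitely many conjugacy classes of $G$ with $1\notin O$. A $C$-group is an equipped group $(G,Y)$ such that $G$ admits a presentation whose generators are the elements of $Y$ and all of whose defining relations have the form $z^{-1}yz=y'$ with $y,y',z\in Y$. The factorization semigroup $S(G,O)$ is the semigroup generated by symbols $x_g$, $g\in O$, subject to the relations $x_{g_1}x_{g_2}=x_{g_2}x_{g_2^{-1}g_1g_2}=x_{g_1g_2g_1^{-1}}x_{g_1}$ for all $g_1,g_2\in O$; the product homomorphism $\alpha_G:S(G,O)\to G$ is given by $x_g\mapsto g$. Two elements $s_1,s_2$ of a semigroup $S$ are called equivalent if there exist $s_3,s_4\in S$ with $s_3s_1s_4=s_3s_2s_4$. *)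

From Stdlib Require Import List.
Import ListNotations.

Record Grp := {
  carrier :> Type;
  gmul : carrier -> carrier -> carrier;
  ginv : carrier -> carrier;
  gone : carrier;
  gmulA : forall x y z, gmul x (gmul y z) = gmul (gmul x y) z;
  gmul1 : forall x, gmul gone x = x;
  gmulV : forall x, gmul (ginv x) x = gone
}.

Arguments gmul {g} _ _.
Arguments ginv {g} _.
Arguments gone {g}.

Definition is_hom {G H : Grp} (phi : G -> H) : Prop :=
  forall x y, phi (gmul x y) = gmul (phi x) (phi y).

Inductive gen {G : Grp} (Y : G -> Prop) : G -> Prop :=
| gen_one : gen Y gone
| gen_Y : forall y, Y y -> gen Y y
| gen_mul : forall x y, gen Y x -> gen Y y -> gen Y (gmul x y)
| gen_inv : forall x, gen Y x -> gen Y (ginv x).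

Definition equipped (G : Grp) (O : G -> Prop) : Prop :=
  (exists l : list G, forall x,
      O x <-> exists g h, In g l /\ x = gmul (ginv h) (gmul g h))
  /\ ~ O gone.

(* (G,Y) is a C-group: equipped, and G admits a presentation whose
   generators are the elements of Y and whose defining relations R are
   all of the form z^-1 y z = y' (y,y',z in Y).  "G = <Y | R>" is expressed
   by its universal property: Y generates G, the relations R hold in G, and
   every map of Y into a group H respecting R extends to a homomorphism. *)
Definition C_group (G : Grp) (Y : G -> Prop) : Prop :=
  equipped G Y /\
  exists R : G -> G -> G -> Prop,
    (forall y z y', R y z y' ->
        Y y /\ Y z /\ Y y' /\ gmul (ginv z) (gmul y z) = y') /\
    (forall x, gen Y x) /\
    (forall (H : Grp) (f : G -> H),
        (forall y z y', R y z y' -> gmul (ginv (f z)) (gmul (f y) (f z)) = f y') ->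
        exists phi : G -> H, is_hom phi /\ forall y, Y y -> phi y = f y).

(* Factorization semigroup S(G,O): its elements are represented by nonempty
   words x_{g_1} ... x_{g_n} (g_i in O), modulo the congruence fact_cong
   generated by x_{g1} x_{g2} = x_{g2} x_{g2^-1 g1 g2} = x_{g1 g2 g1^-1} x_{g1}. *)
Definition word_in {G : Grp} (O : G -> Prop) (w : list G) : Prop :=
  w <> [] /\ Forall O w.

Inductive fact_cong {G : Grp} (O : G -> Prop) : list G -> list G -> Prop :=
| fc_rel1 : forall u v g1 g2, O g1 -> O g2 ->
    fact_cong O (u ++ [g1; g2] ++ v)
                (u ++ [g2; gmul (ginv g2) (gmul g1 g2)] ++ v)
| fc_rel2 : forall u v g1 g2, O g1 -> O g2 ->
    fact_cong O (u ++ [g1; g2] ++ v)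
                (u ++ [gmul g1 (gmul g2 (ginv g1)); g1] ++ v)
| fc_refl : forall w, fact_cong O w w
| fc_sym : forall w1 w2, fact_cong O w1 w2 -> fact_cong O w2 w1
| fc_trans : forall w1 w2 w3,
    fact_cong O w1 w2 -> fact_cong O w2 w3 -> fact_cong O w1 w3.

Definition alpha {G : Grp} (w : list G) : G :=
  fold_right (fun g acc => gmul g acc) gone w.

Definition equivalent {G : Grp} (O : G -> Prop) (w1 w2 : list G) : Prop :=
  exists w3 w4, word_in O w3 /\ word_in O w4 /\
    fact_cong O (w3 ++ w1 ++ w4) (w3 ++ w2 ++ w4).

From Stdlib Require Import List ClassicalEpsilon FunctionalExtensionality
  PropExtensionality ProofIrrelevance.
Import ListNotations.

(* A C-group is presented by its letters Y subject to relations z^-1 y z = y', so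
   any assignment of Y into a group respecting these relations extends to a
   homomorphism from G.  Modulo equivalence, words over Y form a cancellative
   semigroup obeying the commutation rule s t = t s^(alpha t); this is an Ore
   condition, so these words embed into a group of fractions s t^-1, in which
   the one-letter words satisfy the relations of the presentation.  The resulting
   homomorphism phi : G -> fractions sends alpha(s) to s/1, hence alpha(s1) =
   alpha(s2) gives s1/1 = s2/1, i.e. s1 and s2 are equivalent.  The converse holds
   because the relations preserve the product. *)

Section GroupFacts.
Context {G : Grp}.

Lemma gmulrV (x : G) : gmul x (ginv x) = gone.
Proof.
  rewrite <- (gmul1 G (gmul x (ginv x))).
  rewrite <- (gmulV G (ginv x)) at 1.
  rewrite <- gmulA, (gmulA G (ginv x) x (ginv x)), gmulV, gmul1.
  apply gmulV.
Qed.

Lemma gmulr1 (x : G) : gmul x gone = x.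
Proof. rewrite <- (gmulV G x), gmulA, gmulrV, gmul1. reflexivity. Qed.

Lemma gmul_cancel_l (a x y : G) : gmul a x = gmul a y -> x = y.
Proof.
  intro H. rewrite <- (gmul1 G x), <- (gmul1 G y), <- (gmulV G a), <- !gmulA, H.
  reflexivity.
Qed.

Lemma gmul_cancel_r (a x y : G) : gmul x a = gmul y a -> x = y.
Proof.
  intro H. rewrite <- (gmulr1 x), <- (gmulr1 y), <- (gmulrV a), !gmulA, H.
  reflexivity.
Qed.

Lemma ginvM (x y : G) : ginv (gmul x y) = gmul (ginv y) (ginv x).
Proof.
  apply (gmul_cancel_l (gmul x y)).
  rewrite gmulrV, <- gmulA, (gmulA G y (ginv y)), gmulrV, gmul1, gmulrV.
  reflexivity.
Qed.

Lemma ginv1 : ginv (@gone G) = gone.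
Proof. rewrite <- (gmul1 G (ginv gone)). apply gmulrV. Qed.

Definition gconj (h g : G) : G := gmul (ginv h) (gmul g h).

Lemma gconjg1 (g : G) : gconj gone g = g.
Proof. unfold gconj. rewrite ginv1, gmul1, gmulr1. reflexivity. Qed.

Lemma gconj1g (h : G) : gconj h gone = gone.
Proof. unfold gconj. rewrite gmul1, gmulV. reflexivity. Qed.

Lemma gconjgM (k h g : G) : gconj (gmul k h) g = gconj h (gconj k g).
Proof. unfold gconj. rewrite ginvM, !gmulA. reflexivity. Qed.

Lemma gconjMg (h a b : G) : gconj h (gmul a b) = gmul (gconj h a) (gconj h b).
Proof.
  unfold gconj. rewrite !gmulA. f_equal. rewrite <- !gmulA. do 2 f_equal.
  rewrite (gmulA G h (ginv h)), gmulrV, gmul1. reflexivity.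
Qed.

Lemma gconjVg (h a : G) : gconj h (ginv a) = ginv (gconj h a).
Proof.
  apply (gmul_cancel_l (gconj h a)).
  rewrite gmulrV, <- gconjMg, gmulrV, gconj1g. reflexivity.
Qed.

Lemma gconjgg (z : G) : gconj z z = z.
Proof. unfold gconj. rewrite gmulA, gmulV, gmul1. reflexivity. Qed.

Definition wconj (h : G) (w : list G) : list G := map (gconj h) w.

Lemma wconjg1 (w : list G) : wconj gone w = w.
Proof. unfold wconj. erewrite map_ext by apply gconjg1. apply map_id. Qed.

Lemma wconjgM (k h : G) (w : list G) : wconj (gmul k h) w = wconj h (wconj k w).
Proof. unfold wconj. rewrite map_map. apply map_ext. apply gconjgM. Qed.

Lemma alpha_app (u v : list G) : alpha (u ++ v) = gmul (alpha u) (alpha v).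
Proof.
  induction u as [|g u IH]; simpl.
  - rewrite gmul1. reflexivity.
  - rewrite IH, gmulA. reflexivity.
Qed.

End GroupFacts.

Lemma hom1 {G H : Grp} (phi : G -> H) : is_hom phi -> phi gone = gone.
Proof.
  intro Hphi. apply (gmul_cancel_l (phi gone)).
  rewrite <- Hphi, gmul1, gmulr1. reflexivity.
Qed.

Lemma equipped_conj_closed {G : Grp} (Y : G -> Prop) :
  equipped G Y -> forall h x, Y x -> Y (gconj h x).
Proof.
  intros [[l Hl] _] h x Hx. apply Hl in Hx. destruct Hx as [g [k [Hg ->]]].
  apply Hl. exists g, (gmul k h). split; [exact Hg|].
  symmetry. exact (gconjgM k h g).
Qed.

Ltac solve_app := simpl; rewrite ?app_nil_r; repeat (rewrite <- app_assoc; simpl);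
  rewrite ?app_nil_r; reflexivity.

Section FactorizationCongruence.
Context {G : Grp} (Y : G -> Prop).

Lemma fc_context (w1 w2 : list G) :
  fact_cong Y w1 w2 -> forall l r, fact_cong Y (l ++ w1 ++ r) (l ++ w2 ++ r).
Proof.
  assert (reassoc : forall l r u x v : list G,
             l ++ (u ++ x ++ v) ++ r = (l ++ u) ++ x ++ (v ++ r))
    by (intros; rewrite <- !app_assoc; reflexivity).
  induction 1; intros l r; try (rewrite !reassoc; constructor; assumption).
  - apply fc_refl.
  - apply fc_sym; auto.
  - eapply fc_trans; eauto.
Qed.

Lemma fc_app_l (l w1 w2 : list G) :
  fact_cong Y w1 w2 -> fact_cong Y (l ++ w1) (l ++ w2).
Proof.
  intro H. pose proof (fc_context w1 w2 H l []) as K. rewrite !app_nil_r in K. exact K.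
Qed.

Lemma fc_app_r (r w1 w2 : list G) :
  fact_cong Y w1 w2 -> fact_cong Y (w1 ++ r) (w2 ++ r).
Proof. intro H. exact (fc_context w1 w2 H [] r). Qed.

Lemma fc_alpha (w1 w2 : list G) : fact_cong Y w1 w2 -> alpha w1 = alpha w2.
Proof.
  induction 1; try congruence; rewrite !alpha_app; f_equal; simpl;
    rewrite !gmulr1; f_equal.
  - rewrite gmulA, gmulrV, gmul1. reflexivity.
  - rewrite <- !gmulA, gmulV, gmulr1. reflexivity.
Qed.

Hypothesis Yconj : forall h x, Y x -> Y (gconj h x).

Lemma Forall_wconj (h : G) (w : list G) : Forall Y w -> Forall Y (wconj h w).
Proof. intro H. apply Forall_map. eapply Forall_impl; [|exact H]. auto. Qed.

Lemma fc_wconj (h : G) (w1 w2 : list G) :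
  fact_cong Y w1 w2 -> fact_cong Y (wconj h w1) (wconj h w2).
Proof.
  unfold wconj. induction 1; rewrite ?map_app; simpl.
  - replace (gconj h (gmul (ginv g2) (gmul g1 g2))) with
      (gmul (ginv (gconj h g2)) (gmul (gconj h g1) (gconj h g2)))
      by (rewrite !gconjMg, gconjVg; reflexivity).
    apply fc_rel1; auto.
  - replace (gconj h (gmul g1 (gmul g2 (ginv g1)))) with
      (gmul (gconj h g1) (gmul (gconj h g2) (ginv (gconj h g1))))
      by (rewrite !gconjMg, gconjVg; reflexivity).
    apply fc_rel2; auto.
  - apply fc_refl.
  - apply fc_sym; auto.
  - eapply fc_trans; eauto.
Qed.

Lemma fc_commute_letter (g : G) (b : list G) :
  Y g -> Forall Y b -> fact_cong Y (g :: b) (b ++ [gconj (alpha b) g]).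
Proof.
  intros Hg Hb. revert g Hg. induction Hb as [|c b Hc Hb IH]; intros g Hg; simpl.
  - rewrite gconjg1. apply fc_refl.
  - rewrite gconjgM.
    apply fc_trans with (c :: gconj c g :: b).
    + exact (fc_rel1 Y [] b g c Hg Hc).
    + apply (fc_app_l [c]). auto.
Qed.

Lemma fc_commute (a b : list G) :
  Forall Y a -> Forall Y b -> fact_cong Y (a ++ b) (b ++ wconj (alpha b) a).
Proof.
  intros Ha Hb. induction Ha as [|g a Hg Ha IH].
  - simpl. rewrite app_nil_r. apply fc_refl.
  - apply fc_trans with ((g :: b) ++ wconj (alpha b) a).
    + exact (fc_app_l [g] _ _ IH).
    + replace (b ++ wconj (alpha b) (g :: a))
        with ((b ++ [gconj (alpha b) g]) ++ wconj (alpha b) a) by solve_app.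
      apply fc_app_r, fc_commute_letter; assumption.
Qed.

Lemma fc_commute_inv (a b : list G) :
  Forall Y a -> Forall Y b -> fact_cong Y (wconj (ginv (alpha a)) b ++ a) (a ++ b).
Proof.
  intros Ha Hb. eapply fc_trans.
  - apply fc_commute; [apply Forall_wconj|]; assumption.
  - rewrite <- wconjgM, gmulV, wconjg1. apply fc_refl.
Qed.

Lemma fc_move_out (p' p t q q' : list G) :
  Forall Y p -> Forall Y p' -> Forall Y q -> Forall Y q' ->
  fact_cong Y (p' ++ p ++ t ++ q ++ q')
    (wconj (ginv (alpha p')) p ++ p' ++ t ++ q' ++ wconj (alpha q') q).
Proof.
  intros Hp Hp' Hq Hq'. eapply fc_trans.
  - rewrite app_assoc. apply fc_app_r, fc_sym, fc_commute_inv; assumption.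
  - rewrite <- !app_assoc. do 3 apply fc_app_l. apply fc_commute; assumption.
Qed.

End FactorizationCongruence.

Record group_mod {A : Type} (E : A -> A -> Prop) (m : A -> A -> A) (i : A -> A) (e : A)
  : Prop := {
  gm_refl : forall x, E x x;
  gm_sym : forall x y, E x y -> E y x;
  gm_trans : forall x y z, E x y -> E y z -> E x z;
  gm_mul_compat : forall x x' y y', E x x' -> E y y' -> E (m x y) (m x' y');
  gm_inv_compat : forall x x', E x x' -> E (i x) (i x');
  gm_mulA : forall x y z, E (m x (m y z)) (m (m x y) z);
  gm_mul1 : forall x, E (m e x) x;
  gm_mulV : forall x, E (m (i x) x) e
}.

Arguments gm_refl {A E m i e}.
Arguments gm_sym {A E m i e}.
Arguments gm_trans {A E m i e}.
Arguments gm_mul_compat {A E m i e}.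
Arguments gm_inv_compat {A E m i e}.
Arguments gm_mulA {A E m i e}.
Arguments gm_mul1 {A E m i e}.
Arguments gm_mulV {A E m i e}.

Section QuotientGroup.
Context {A : Type} (E : A -> A -> Prop) (m : A -> A -> A) (i : A -> A) (e : A).
Hypothesis HE : group_mod E m i e.

Definition quot : Type := {P : A -> Prop | exists x, P = E x}.

Definition cls (x : A) : quot := exist _ (E x) (ex_intro _ x eq_refl).

Definition repr (q : quot) : A :=
  proj1_sig (constructive_indefinite_description _ (proj2_sig q)).

Lemma cls_repr (q : quot) : cls (repr q) = q.
Proof.
  destruct q as [P HP]. unfold repr, cls. simpl.
  destruct (constructive_indefinite_description _ HP) as [x Hx]. simpl.
  apply subset_eq_compat. symmetry. exact Hx.
Qed.

Lemma cls_eq (x y : A) : E x y -> cls x = cls y.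
Proof.
  intro H. apply subset_eq_compat, functional_extensionality. intro z.
  apply propositional_extensionality.
  split; intro K; eapply (gm_trans HE); eauto.
  apply (gm_sym HE), H.
Qed.

Lemma cls_inj (x y : A) : cls x = cls y -> E x y.
Proof.
  intro H. apply (f_equal (@proj1_sig _ _)) in H. simpl in H.
  rewrite H. apply (gm_refl HE).
Qed.

Lemma repr_cls (x : A) : E (repr (cls x)) x.
Proof. apply cls_inj, cls_repr. Qed.

Definition qmul (q1 q2 : quot) : quot := cls (m (repr q1) (repr q2)).
Definition qinv (q : quot) : quot := cls (i (repr q)).

Lemma qmul_cls (x y : A) : qmul (cls x) (cls y) = cls (m x y).
Proof. apply cls_eq, (gm_mul_compat HE); apply repr_cls. Qed.

Lemma qinv_cls (x : A) : qinv (cls x) = cls (i x).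
Proof. apply cls_eq, (gm_inv_compat HE), repr_cls. Qed.

Lemma qmulA (x y z : quot) : qmul x (qmul y z) = qmul (qmul x y) z.
Proof.
  rewrite <- (cls_repr x), <- (cls_repr y), <- (cls_repr z), !qmul_cls.
  apply cls_eq, (gm_mulA HE).
Qed.

Lemma qmul1 (x : quot) : qmul (cls e) x = x.
Proof. rewrite <- (cls_repr x), qmul_cls. apply cls_eq, (gm_mul1 HE). Qed.

Lemma qmulV (x : quot) : qmul (qinv x) x = cls e.
Proof.
  rewrite <- (cls_repr x), qinv_cls, qmul_cls. apply cls_eq, (gm_mulV HE).
Qed.

Definition quot_group : Grp :=
  {| carrier := quot; gmul := qmul; ginv := qinv; gone := cls e;
     gmulA := qmulA; gmul1 := qmul1; gmulV := qmulV |}.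

End QuotientGroup.

Arguments cls_eq {A E m i e} HE {x y}.
Arguments cls_inj {A E m i e} HE {x y}.
Arguments qmul_cls {A E m i e} HE x y.
Arguments qinv_cls {A E m i e} HE x.
Arguments quot_group {A E m i e} HE.

Section Fractions.
Context {G : Grp} (Y : G -> Prop).
Hypothesis Yconj : forall h x, Y x -> Y (gconj h x).

Lemma word_in_app_l (p q : list G) : word_in Y p -> Forall Y q -> word_in Y (p ++ q).
Proof.
  intros [Hn Hp] Hq. split.
  - destruct p; [congruence|discriminate].
  - apply Forall_app; auto.
Qed.

Lemma word_in_app_r (p q : list G) : Forall Y p -> word_in Y q -> word_in Y (p ++ q).
Proof.
  intros Hp [Hn Hq]. split.
  - destruct p; [assumption|discriminate].
  - apply Forall_app; auto.
Qed.

Lemma word_in_wconj (h : G) (w : list G) : word_in Y w -> word_in Y (wconj h w).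
Proof.
  intros [Hn Hw]. split.
  - destruct w; [congruence|discriminate].
  - apply Forall_wconj; assumption.
Qed.

Lemma eqv_sym (s t : list G) : equivalent Y s t -> equivalent Y t s.
Proof. intros [p [q [Hp [Hq H]]]]. exists p, q. auto using fc_sym. Qed.

Lemma eqv_alpha (s t : list G) : equivalent Y s t -> alpha s = alpha t.
Proof.
  intros [p [q [_ [_ H]]]]. apply fc_alpha in H. rewrite !alpha_app in H.
  exact (gmul_cancel_r _ _ _ (gmul_cancel_l _ _ _ H)).
Qed.

Lemma eqv_cancel_l (u s t : list G) :
  Forall Y u -> equivalent Y (u ++ s) (u ++ t) -> equivalent Y s t.
Proof.
  intros Hu [p [q [Hp [Hq H]]]]. exists (p ++ u), q.
  split; [apply word_in_app_l; assumption|]. split; [assumption|].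
  rewrite <- !app_assoc in H |- *. exact H.
Qed.

Lemma eqv_cancel_r (u s t : list G) :
  Forall Y u -> equivalent Y (s ++ u) (t ++ u) -> equivalent Y s t.
Proof.
  intros Hu [p [q [Hp [Hq H]]]]. exists p, (u ++ q).
  split; [assumption|]. split; [apply word_in_app_r; assumption|].
  rewrite <- !app_assoc in H. exact H.
Qed.

Lemma eqv_wconj (h : G) (s t : list G) :
  equivalent Y s t -> equivalent Y (wconj h s) (wconj h t).
Proof.
  intros [p [q [Hp [Hq H]]]]. exists (wconj h p), (wconj h q).
  split; [apply word_in_wconj; assumption|]. split; [apply word_in_wconj; assumption|].
  apply (fc_wconj Y Yconj h) in H. unfold wconj in *. rewrite !map_app in H. exact H.
Qed.

Lemma eqv_trans (s t r : list G) :
  equivalent Y s t -> equivalent Y t r -> equivalent Y s r.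
Proof.
  intros [p [q [Hp [Hq H1]]]] [p' [q' [Hp' [Hq' H2]]]].
  exists (p' ++ p), (q ++ q').
  split; [apply word_in_app_r; [apply Hp'|exact Hp]|].
  split; [apply word_in_app_l; [exact Hq|apply Hq']|].
  destruct Hp as [_ Fp], Hq as [_ Fq], Hp' as [_ Fp'], Hq' as [_ Fq'].
  pose proof (fc_context Y _ _ H1 p' q') as K1.
  pose proof (fc_context Y _ _ H2 (wconj (ginv (alpha p')) p) (wconj (alpha q') q)) as K2.
  rewrite <- !app_assoc in K1. rewrite <- !app_assoc in K2. rewrite <- !app_assoc.
  eapply fc_trans; [exact K1|].
  eapply fc_trans; [apply fc_move_out; assumption|].
  eapply fc_trans; [exact K2|].
  apply fc_sym, fc_move_out; assumption.
Qed.

Lemma eqv_app_l (u s t : list G) :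
  Forall Y u -> equivalent Y s t -> equivalent Y (u ++ s) (u ++ t).
Proof.
  intros Hu [p [q [Hp [Hq H]]]]. exists p, q. split; [assumption|]. split; [assumption|].
  destruct Hp as [_ Fp].
  assert (move : forall x, fact_cong Y (p ++ (u ++ x) ++ q)
                                      (wconj (ginv (alpha p)) u ++ p ++ x ++ q)).
  { intro x.
    replace (p ++ (u ++ x) ++ q) with ((p ++ u) ++ x ++ q) by solve_app.
    replace (wconj (ginv (alpha p)) u ++ p ++ x ++ q)
      with ((wconj (ginv (alpha p)) u ++ p) ++ x ++ q) by solve_app.
    apply fc_app_r, fc_sym, fc_commute_inv; assumption. }
  eapply fc_trans; [apply move|]. eapply fc_trans; [|apply fc_sym, move].
  apply fc_app_l. exact H.
Qed.

Lemma eqv_app_r (u s t : list G) :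
  Forall Y u -> equivalent Y s t -> equivalent Y (s ++ u) (t ++ u).
Proof.
  intros Hu [p [q [Hp [Hq H]]]]. exists p, q. split; [assumption|]. split; [assumption|].
  destruct Hq as [_ Fq].
  assert (move : forall x, fact_cong Y (p ++ (x ++ u) ++ q)
                                      ((p ++ x ++ q) ++ wconj (alpha q) u)).
  { intro x. rewrite <- !app_assoc. do 2 apply fc_app_l.
    apply fc_commute; assumption. }
  eapply fc_trans; [apply move|]. eapply fc_trans; [|apply fc_sym, move].
  apply fc_app_r. exact H.
Qed.

Variable y0 : G.
Hypothesis Yy0 : Y y0.

Lemma eqv_of_fc (s t : list G) : fact_cong Y s t -> equivalent Y s t.
Proof.
  intro H. assert (W : word_in Y [y0]) by (split; [discriminate|constructor; auto]).
  exists [y0], [y0]. split; [exact W|]. split; [exact W|]. apply fc_context. exact H.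
Qed.

Lemma eqv_refl (s : list G) : equivalent Y s s.
Proof. apply eqv_of_fc, fc_refl. Qed.

Lemma eqv_commute (a b : list G) :
  Forall Y a -> Forall Y b -> equivalent Y (a ++ b) (b ++ wconj (alpha b) a).
Proof. intros. apply eqv_of_fc, fc_commute; assumption. Qed.

(* Cancelling [b] from [b b = b b^(alpha b)]. *)
Lemma eqv_wconj_alpha (b : list G) : Forall Y b -> equivalent Y b (wconj (alpha b) b).
Proof. intro Hb. apply (eqv_cancel_l b); [|apply eqv_commute]; assumption. Qed.

Definition frac_valid (x : list G * list G) : Prop := Forall Y (fst x) /\ Forall Y (snd x).

(* [(a, b)] stands for the fraction [a b^-1]; the product moves [b^-1] to the right
   through [c] using [b^-1 c = c^(alpha b) b^-1]. *)
Definition frac_mul (x y : list G * list G) : list G * list G :=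
  (fst x ++ wconj (alpha (snd x)) (fst y), snd y ++ snd x).

Definition frac_inv (x : list G * list G) : list G * list G := (snd x, fst x).

Definition frac_eqv (x y : list G * list G) : Prop :=
  exists u v, Forall Y u /\ Forall Y v /\
    equivalent Y (fst x ++ u) (fst y ++ v) /\ equivalent Y (snd x ++ u) (snd y ++ v).

Lemma frac_valid_mul (x y : list G * list G) :
  frac_valid x -> frac_valid y -> frac_valid (frac_mul x y).
Proof.
  intros [] []. split; simpl; apply Forall_app; split; auto. apply Forall_wconj; auto.
Qed.

Lemma frac_eqv_of_eq (x y : list G * list G) : x = y -> frac_eqv x y.
Proof. intros ->. exists [], []. repeat split; auto using eqv_refl. Qed.

Lemma frac_eqv_sym (x y : list G * list G) : frac_eqv x y -> frac_eqv y x.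
Proof. intros [u [v [Hu [Hv [H1 H2]]]]]. exists v, u. auto using eqv_sym. Qed.

(* [a u u' = c v u' = c u' v^(alpha u') = e v' v^(alpha u')] *)
Lemma eqv_compose_witness (a c e u v u' v' : list G) :
  Forall Y c -> Forall Y u' -> Forall Y v ->
  equivalent Y (a ++ u) (c ++ v) -> equivalent Y (c ++ u') (e ++ v') ->
  equivalent Y (a ++ u ++ u') (e ++ v' ++ wconj (alpha u') v).
Proof.
  intros Hc Hu' Hv H1 H2.
  apply (eqv_trans _ (c ++ v ++ u')).
  { rewrite !app_assoc. apply eqv_app_r; assumption. }
  apply (eqv_trans _ ((c ++ u') ++ wconj (alpha u') v)).
  { rewrite <- app_assoc. apply eqv_app_l, eqv_commute; assumption. }
  rewrite app_assoc. apply eqv_app_r; [apply Forall_wconj|]; assumption.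
Qed.

Lemma frac_eqv_trans (x y z : list G * list G) :
  frac_valid y -> frac_eqv x y -> frac_eqv y z -> frac_eqv x z.
Proof.
  intros [Hc Hd] [u [v [Hu [Hv [H1 H2]]]]] [u' [v' [Hu' [Hv' [H3 H4]]]]].
  exists (u ++ u'), (v' ++ wconj (alpha u') v).
  split; [apply Forall_app; auto|].
  split; [apply Forall_app; split; [|apply Forall_wconj]; assumption|].
  split; [apply (eqv_compose_witness _ (fst y)) | apply (eqv_compose_witness _ (snd y))];
    assumption.
Qed.

Lemma frac_eqv_mul_l (x x' y : list G * list G) :
  frac_valid x -> frac_valid x' -> frac_valid y ->
  frac_eqv x x' -> frac_eqv (frac_mul x y) (frac_mul x' y).
Proof.
  destruct x as [a b], x' as [a' b'], y as [c d].
  intros [Ha Hb] [Ha' Hb'] [Hc Hd] [u [v [Hu [Hv [H1 H2]]]]]. simpl in *.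
  exists u, v. repeat split; auto; simpl.
  - assert (slide : forall a b u, Forall Y a -> Forall Y b -> Forall Y u ->
      equivalent Y ((a ++ wconj (alpha b) c) ++ u) ((a ++ u) ++ wconj (alpha (b ++ u)) c)).
    { intros a0 b0 u0 Ha0 Hb0 Hu0. rewrite <- !app_assoc.
      apply eqv_app_l; [assumption|].
      rewrite alpha_app, wconjgM. apply eqv_commute; [apply Forall_wconj|]; assumption. }
    apply (eqv_trans _ _ _ (slide a b u Ha Hb Hu)).
    apply (eqv_trans _ ((a' ++ v) ++ wconj (alpha (b ++ u)) c)).
    + apply eqv_app_r; [apply Forall_wconj|]; assumption.
    + rewrite (eqv_alpha _ _ H2). apply eqv_sym, slide; assumption.
  - rewrite <- !app_assoc. apply eqv_app_l; assumption.
Qed.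

Lemma frac_eqv_mul_r (x y y' : list G * list G) :
  frac_valid x -> frac_valid y -> frac_valid y' ->
  frac_eqv y y' -> frac_eqv (frac_mul x y) (frac_mul x y').
Proof.
  destruct x as [a b], y as [c d], y' as [c' d'].
  intros [Ha Hb] [Hc Hd] [Hc' Hd'] [u [v [Hu [Hv [H1 H2]]]]]. simpl in *.
  exists (wconj (alpha b) u), (wconj (alpha b) v).
  split; [apply Forall_wconj; assumption|]. split; [apply Forall_wconj; assumption|].
  simpl. split.
  - rewrite <- !app_assoc. apply eqv_app_l; [assumption|].
    unfold wconj. rewrite <- !map_app. apply eqv_wconj; assumption.
  - assert (slide : forall d u, Forall Y d -> Forall Y u ->
       equivalent Y ((d ++ b) ++ wconj (alpha b) u) ((d ++ u) ++ b)).
    { intros d0 u0 Hd0 Hu0. rewrite <- !app_assoc.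
      apply eqv_app_l; [assumption|]. apply eqv_sym, eqv_commute; assumption. }
    apply (eqv_trans _ _ _ (slide d u Hd Hu)).
    apply (eqv_trans _ ((d' ++ v) ++ b)).
    + apply eqv_app_r; assumption.
    + apply eqv_sym, slide; assumption.
Qed.

Lemma frac_mulA (x y z : list G * list G) :
  frac_mul x (frac_mul y z) = frac_mul (frac_mul x y) z.
Proof.
  destruct x as [a b], y as [c d], z as [e f]. unfold frac_mul; simpl.
  unfold wconj at 1. rewrite map_app. fold (wconj (alpha b) (wconj (alpha d) e)).
  rewrite <- wconjgM, alpha_app, !app_assoc. reflexivity.
Qed.

Lemma frac_mul1 (x : list G * list G) : frac_mul ([], []) x = x.
Proof. destruct x as [a b]. unfold frac_mul; simpl. rewrite wconjg1, app_nil_r. reflexivity. Qed.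

Lemma frac_mulV (x : list G * list G) :
  frac_valid x -> frac_eqv (frac_mul (frac_inv x) x) ([], []).
Proof.
  destruct x as [a b]. intros [Ha Hb]. simpl in *. exists [], (b ++ a).
  unfold frac_mul; simpl. rewrite !app_nil_r.
  repeat split; [constructor|apply Forall_app; auto| |apply eqv_refl; assumption].
  apply eqv_app_l; [assumption|]. apply eqv_sym, eqv_wconj_alpha; assumption.
Qed.

Lemma frac_eqv_cancel (a b c : list G) : Forall Y c -> frac_eqv (a ++ c, b ++ c) (a, b).
Proof.
  intro Hc. exists [], c. simpl. rewrite !app_nil_r.
  repeat split; [constructor | assumption | apply eqv_refl | apply eqv_refl].
Qed.

Definition Frac : Type := {x : list G * list G | frac_valid x}.

Lemma frac_valid_inv (x : list G * list G) : frac_valid x -> frac_valid (frac_inv x).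
Proof. intros []; split; assumption. Qed.

Definition Frac_mul (x y : Frac) : Frac :=
  exist _ (frac_mul (proj1_sig x) (proj1_sig y))
    (frac_valid_mul _ _ (proj2_sig x) (proj2_sig y)).

Definition Frac_inv (x : Frac) : Frac :=
  exist _ (frac_inv (proj1_sig x)) (frac_valid_inv _ (proj2_sig x)).

Definition Frac_one : Frac := exist _ ([], []) (conj (Forall_nil _) (Forall_nil _)).

Definition Frac_eqv (x y : Frac) : Prop := frac_eqv (proj1_sig x) (proj1_sig y).

Lemma Frac_group_mod : group_mod Frac_eqv Frac_mul Frac_inv Frac_one.
Proof.
  unfold Frac_eqv. constructor.
  - intro. apply frac_eqv_of_eq. reflexivity.
  - intros x y. apply frac_eqv_sym.
  - intros x y z. apply frac_eqv_trans, proj2_sig.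
  - intros x x' y y' Hx Hy. apply (frac_eqv_trans _ (frac_mul (proj1_sig x') (proj1_sig y))).
    + apply frac_valid_mul; apply proj2_sig.
    + apply frac_eqv_mul_l; try apply proj2_sig; assumption.
    + apply frac_eqv_mul_r; try apply proj2_sig; assumption.
  - intros x x' [u [v [Hu [Hv [H1 H2]]]]]. exists u, v. auto.
  - intros. apply frac_eqv_of_eq, frac_mulA.
  - intros. apply frac_eqv_of_eq, frac_mul1.
  - intros x. apply frac_mulV, proj2_sig.
Qed.

Definition Frac_group : Grp := quot_group Frac_group_mod.

Definition word_frac (s : list G) (Hs : Forall Y s) : Frac :=
  exist _ (s, []) (conj Hs (Forall_nil _)).

Lemma cls_frac_ext (x y : list G * list G) (p : frac_valid x) (q : frac_valid y) :
  x = y -> @cls _ Frac_eqv (exist _ x p) = cls Frac_eqv (exist _ y q).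
Proof. intro. f_equal. apply subset_eq_compat. assumption. Qed.

(* The value off [Y] is irrelevant. *)
Definition letter (g : G) : Frac_group :=
  match excluded_middle_informative (Y g) with
  | left Hg => cls Frac_eqv (word_frac [g] (Forall_cons _ Hg (Forall_nil _)))
  | right _ => cls Frac_eqv Frac_one
  end.

Lemma letter_Y (g : G) (Hg : Forall Y [g]) : letter g = cls Frac_eqv (word_frac [g] Hg).
Proof.
  unfold letter. destruct (excluded_middle_informative (Y g)) as [|notY].
  - apply cls_frac_ext. reflexivity.
  - inversion Hg. contradiction.
Qed.

Lemma letter_conj (y z : G) :
  Y y -> Y z -> Y (gconj z y) ->
  gmul (ginv (letter z)) (gmul (letter y) (letter z)) = letter (gconj z y).
Proof.
  intros Hy Hz Hy'. simpl.
  rewrite (letter_Y y (Forall_cons _ Hy (Forall_nil _))),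
    (letter_Y z (Forall_cons _ Hz (Forall_nil _))),
    (letter_Y _ (Forall_cons _ Hy' (Forall_nil _))).
  rewrite !(qmul_cls Frac_group_mod), (qinv_cls Frac_group_mod), (qmul_cls Frac_group_mod).
  apply (cls_eq Frac_group_mod). unfold Frac_eqv; simpl.
  unfold frac_mul; simpl. rewrite !gmulr1, gconjg1, gconjgg.
  apply (frac_eqv_cancel [gconj z y] [] [z]). repeat constructor; assumption.
Qed.

Lemma hom_alpha (phi : G -> Frac_group) :
  is_hom phi -> (forall g, Y g -> phi g = letter g) ->
  forall s (Hs : Forall Y s), phi (alpha s) = cls Frac_eqv (word_frac s Hs).
Proof.
  intros Hphi Hletter s. induction s as [|g s IH]; intro Hs; simpl.
  - rewrite (hom1 phi Hphi). apply cls_frac_ext. reflexivity.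
  - inversion Hs as [|? ? Hg Hs']; subst.
    rewrite Hphi, (IH Hs'), Hletter, (letter_Y g (Forall_cons _ Hg (Forall_nil _)))
      by assumption.
    simpl. rewrite (qmul_cls Frac_group_mod). apply cls_frac_ext.
    unfold frac_mul; simpl. rewrite wconjg1. reflexivity.
Qed.

Lemma eqv_of_alpha_eq (phi : G -> Frac_group) :
  is_hom phi -> (forall g, Y g -> phi g = letter g) ->
  forall s1 s2, Forall Y s1 -> Forall Y s2 -> alpha s1 = alpha s2 -> equivalent Y s1 s2.
Proof.
  intros Hphi Hletter s1 s2 Hs1 Hs2 Heq.
  pose proof (hom_alpha phi Hphi Hletter s1 Hs1) as E1.
  rewrite Heq, (hom_alpha phi Hphi Hletter s2 Hs2) in E1.
  apply (cls_inj Frac_group_mod) in E1.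
  destruct E1 as [u [v [Hu [Hv [K1 K2]]]]]. simpl in K1, K2.
  apply (eqv_cancel_r v); [assumption|].
  apply (eqv_trans _ (s2 ++ u)); [apply eqv_sym; assumption|].
  apply eqv_app_l; assumption.
Qed.

End Fractions.

Theorem theorem3p4 (G : Grp) (Y : G -> Prop) (HC : C_group G Y)
  (s1 s2 : list G) (H1 : word_in Y s1) (H2 : word_in Y s2) :
  equivalent Y s1 s2 <-> alpha s1 = alpha s2.
Proof.
  split; [apply eqv_alpha|].
  destruct HC as [HE [R [HR [_ Huniv]]]].
  pose proof (equipped_conj_closed Y HE) as Yconj.
  destruct H1 as [Hne Hs1], H2 as [_ Hs2].
  destruct s1 as [|y0 s1']; [congruence|].
  assert (Yy0 : Y y0) by (inversion Hs1; assumption).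
  destruct (Huniv (Frac_group Y Yconj y0 Yy0) (letter Y Yconj y0 Yy0)) as [phi [Hphi Hletter]].
  - intros y z y' Hr. destruct (HR y z y' Hr) as [Hy [Hz [Hy' <-]]].
    apply letter_conj; assumption.
  - apply (eqv_of_alpha_eq Y Yconj y0 Yy0 phi); assumption.
Qed.
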